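(* Let $d\ge1$ be fixed, let $P$ be a set of $n\ge2$ points in $\mathbb{R}^d$ with spread $\Phi$, and let $\varepsilon\in(0,1/2)$. Let $p_1,\dots,p_n$ be a greedy permutation of $P$ with radii $r_1\ge r_2\ge\cdots$, let $F_i$ be the friend lists, and let $G=(P,E)$ be the directed graph with $E=\{p_j\to p_i : p_j\in F_i,\ i=1,\dots,n\}$, as defined in the context. Then for every query point $q\in\mathbb{R}^d$, the greedy routing procedure described in the context (starting from $p_1$) returns a point $p\in P$ with $d(q,p)\le(1+\varepsilon)\min_{p'\in P}d(q,p')$, and the query time is $O(\varepsilon^{-d-1}\log^2\Phi)$.
   Context: Distances are Euclidean. The spread $\Phi$ of $P$ is the ratio of the largest to the smallest pairwise distance in $P$. Greedy permutation: $p_1\in P$ is arbitrary; for $i\ge2$, $p_i$ is a point of $P\setminus P_{i-1}$ furthest from $P_{i-1}=\{p_1,\dots,p_{i-1}\}$, i.e., maximizing $d(p,P_{i-1})=\min_{x\in P_{i-1}}d(p,x)$. The radii are $r_1=\max_{p\in P}d(p,p_1)$ and, for $i\ge2$, $r_{i-1}=d(p_i,P_{i-1})$. The friend list of $p_i$ ($i\ge2$) is $F_i=P_{i-1}\cap\{x: d(x,p_i)\le 8r_{i-1}/\varepsilon\}$, and $F_1=\emptyset$. In $G$ the outgoing edges of each vertex are stored sorted by increasing index of the destination. Greedy routing for $q$: set the current vertex $c=p_1$; scan the outgoing edges $c\to p_j$ of $c$ in increasing order of $j$, and as soon as an edge with $d(q,p_j)\le(1-\varepsilon/4)d(q,c)$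 is found, set $c=p_j$ and restart scanning the outgoing edges of the new $c$; when all outgoing edges of $c$ are scanned without such a move, return $c$. The constants in the $O(\cdot)$ notation depend only on $d$. *)

From HB Require Import structures.
From mathcomp Require Import all_boot all_order all_algebra.
From mathcomp Require Import reals exp.
Set Implicit Arguments. Unset Strict Implicit. Unset Printing Implicit Defensive.
Import Order.TTheory GRing.Theory Num.Theory.
Local Open Scope ring_scope.

Section GreedyRouting.
Variables (R : realType) (d : nat).
Notation pt := 'rV[R]_d.

Definition edist (x y : pt) : R := Num.sqrt (\sum_(k < d) (x ord0 k - y ord0 k) ^+ 2).

(* The greedy permutation is given as a sequence ps = [:: p_1; ...; p_n];
   the paper's p_i is  nth 0 ps (i-1)  (0-based indices below). *)
Variable ps : seq pt.
Notation p i := (nth 0 ps i).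

(* d(x, P_i) with P_i = {p_1,...,p_i} = {nth 0 ps k | k < i}; meaningful for i >= 1
   (the default of the min is p_1, which belongs to P_i). *)
Definition dpre (x : pt) (i : nat) : R :=
  \big[Num.min/edist x (p 0)]_(k < i) edist x (p k).

(* greedy permutation: for i >= 2 (1-based), p_i maximizes d(., P_{i-1}) over P \ P_{i-1}
   (0-based: for 0 < i <= j < n, d(p_j, prefix i) <= d(p_i, prefix i)). *)
Definition greedy_perm : Prop :=
  forall i j : nat, (0 < i)%N -> (i <= j)%N -> (j < size ps)%N ->
    dpre (p j) i <= dpre (p i) i.

(* radii r_i (1-based i >= 1): r_1 = max_p d(p, p_1);  r_{i-1} = d(p_i, P_{i-1}) for i >= 2,
   i.e. r_i = d(p_{i+1}, P_i) = dpre (nth 0 ps i) i. *)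
Definition radius (i : nat) : R :=
  if i == 1%N then \big[Num.max/0]_(x <- ps) edist x (p 0)
  else dpre (p i) i.

Variable eps : R.

(* edge p_k -> p_j (0-based k, j) iff p_k is in the friend list F of p_j:
   j is not the first point, k < j and d(p_k, p_j) <= 8 r_{j} / eps
   (0-based j corresponds to paper index j+1, whose friend radius is r_{(j+1)-1} = r_j). *)
Definition edge (k j : nat) : bool :=
  [&& (0 < j)%N, (k < j)%N & edist (p k) (p j) <= 8 * radius j / eps].

Definition out_edges (c : nat) : seq nat := [seq j <- iota 0 (size ps) | edge c j].

Variable q : pt.

Definition improves (c j : nat) : bool := edist q (p j) <= (1 - eps / 4) * edist q (p c).

(* route c t r : greedy routing started at the current vertex p_c scans exactly t
   edges in total and returns p_r. *)
Inductive route : nat -> nat -> nat -> Prop :=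
| route_stop c :
    (forall m, (m < size (out_edges c))%N -> ~~ improves c (nth 0%N (out_edges c) m)) ->
    route c (size (out_edges c)) c
| route_move c m t r :
    (m < size (out_edges c))%N ->
    improves c (nth 0%N (out_edges c) m) ->
    (forall m', (m' < m)%N -> ~~ improves c (nth 0%N (out_edges c) m')) ->
    route (nth 0%N (out_edges c) m) t r ->
    route c (m.+1 + t) r.

Definition maxdist : R :=
  \big[Num.max/0]_(i < size ps) \big[Num.max/0]_(j < size ps | i != j) edist (p i) (p j).
Definition mindist : R :=
  \big[Num.min/maxdist]_(i < size ps) \big[Num.min/maxdist]_(j < size ps | i != j)
     edist (p i) (p j).
Definition spread : R := maxdist / mindist.

End GreedyRouting.

(* Correctness: suppose the walk is at p_c with d(q,p_c) > (1+eps) d(q,p) and no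
   point preceding p_c in the greedy order lies in the ball B of radius
   a := eps d(q,p_c)/4 around p.  The first point p_j of the greedy order in B comes
   after p_c, and by greediness r_{j-1} > a, which puts p_c in the friend list of
   p_j; moreover d(q,p_j) <= (1 - eps/4) d(q,p_c).  So the walk cannot stop at p_c,
   and the first improving successor it takes has index at most j, so that the
   hypothesis on B survives the move.

   Time: a successor p_j of p_c lies within 8 r_{j-1}/eps of p_c and at distance at
   least r_{j-1} from every earlier point.  Grouping successors by the scale
   ln (maxdist / r_{j-1}), which takes at most 1 + ln Phi values, and covering a
   neighbourhood of p_c by a grid of cells of diameter below r_{j-1} shows that the
   out-degree is O(eps^-d log Phi).  The distance to q shrinks geometrically along
   the walk and stays bounded below while the walk moves, so there are
   O(eps^-1 log Phi) moves. *)
From HB Require Import structures.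
From mathcomp Require Import all_boot all_order all_algebra.
From mathcomp Require Import reals sequences exp.
From mathcomp Require Import ring lra zify.
Set Implicit Arguments. Unset Strict Implicit. Unset Printing Implicit Defensive.
Import Order.TTheory GRing.Theory Num.Theory.
Local Open Scope ring_scope.

Section Minkowski.
Variable R : rcfType.

Lemma sqrt_sumsqrD (s t u v : R) :
  Num.sqrt ((s + t) ^+ 2 + (u + v) ^+ 2) <=
  Num.sqrt (s ^+ 2 + u ^+ 2) + Num.sqrt (t ^+ 2 + v ^+ 2).
Proof.
set A := s ^+ 2 + u ^+ 2; set B := t ^+ 2 + v ^+ 2.
have A0 : 0 <= A by rewrite addr_ge0 ?sqr_ge0.
have B0 : 0 <= B by rewrite addr_ge0 ?sqr_ge0.
have eA := sqr_sqrtr A0; have eB := sqr_sqrtr B0.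
have sA := sqrtr_ge0 A; have sB := sqrtr_ge0 B.
(* Cauchy-Schwarz in the plane, via Lagrange's identity *)
have CS : s * t + u * v <= Num.sqrt A * Num.sqrt B.
  rewrite -sqrtrM //; apply: le_trans (ler_norm _) _.
  rewrite -sqrtr_sqr ler_wsqrtr //.
  have := sqr_ge0 (s * v - t * u); rewrite /A /B; nra.
rewrite -(ger0_norm (addr_ge0 sA sB)) -sqrtr_sqr ler_wsqrtr //.
move: CS eA eB; rewrite /A /B; nra.
Qed.

Lemma minkowski n (f g : 'I_n -> R) :
  Num.sqrt (\sum_(k < n) (f k + g k) ^+ 2) <=
  Num.sqrt (\sum_(k < n) f k ^+ 2) + Num.sqrt (\sum_(k < n) g k ^+ 2).
Proof.
elim: n f g => [|n IH] f g; first by rewrite !big_ord0 sqrtr0 addr0.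
rewrite !big_ord_recr /=.
set S := \sum_(i < n) _; set F := \sum_(i < n) _; set G := \sum_(i < n) _.
have [S0 F0 G0] : [/\ 0 <= S, 0 <= F & 0 <= G] by split; apply: sumr_ge0 => i _; apply: sqr_ge0.
have := sqrt_sumsqrD (Num.sqrt F) (Num.sqrt G) (f ord_max) (g ord_max).
rewrite !sqr_sqrtr //; apply: le_trans.
rewrite ler_wsqrtr // lerD2r -[S]sqr_sqrtr //.
by rewrite ler_pXn2r ?nnegrE ?addr_ge0 ?sqrtr_ge0 //; apply: IH.
Qed.

End Minkowski.

Section Euclidean.
Variables (R : realType) (d : nat).
Implicit Types x y z : 'rV[R]_d.

Lemma edist_ge0 x y : 0 <= edist x y.
Proof. exact: sqrtr_ge0. Qed.

Lemma edistC x y : edist x y = edist y x.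
Proof. by rewrite /edist; congr Num.sqrt; apply: eq_bigr => k _; rewrite -sqrrN opprB. Qed.

Lemma edistxx x : edist x x = 0.
Proof. by rewrite /edist big1 ?sqrtr0 // => k _; rewrite subrr expr0n. Qed.

Lemma edist_triangle x y z : edist x z <= edist x y + edist y z.
Proof.
rewrite /edist; under eq_bigr => k _ do rewrite -(subrKA (y ord0 k)).
exact: minkowski.
Qed.

Lemma ler_coord_edist x y k : `|x ord0 k - y ord0 k| <= edist x y.
Proof.
rewrite -sqrtr_sqr ler_wsqrtr // (bigD1 k) //= lerDl.
by apply: sumr_ge0 => i _; apply: sqr_ge0.
Qed.

Lemma edist_eq0 x y : edist x y = 0 -> x = y.
Proof.
move=> xy0; apply/matrixP => i k; rewrite (ord1 i); apply/eqP.
by rewrite -subr_eq0 -normr_le0 -xy0 ler_coord_edist.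
Qed.

Lemma edist_le_coord x y (h : R) : 0 <= h ->
  (forall k, `|x ord0 k - y ord0 k| <= h) -> edist x y <= d%:R * h.
Proof.
move=> h0 xy_h; rewrite -[_ * h]ger0_norm ?mulr_ge0 // -sqrtr_sqr ler_wsqrtr //.
apply: le_trans (_ : \sum_(k < d) h ^+ 2 <= _).
  apply: ler_sum => k _; rewrite -real_normK ?num_real //.
  by rewrite ler_pXn2r ?nnegrE ?normr_ge0.
rewrite sumr_const card_ord -[_ *+ d]mulr_natl exprMn.
apply: ler_wpM2r; first exact: sqr_ge0.
by rewrite -natrX ler_nat; case: (d) => // n; rewrite expnS leq_pmulr.
Qed.

End Euclidean.

Section GreedyPermutation.
Variables (R : realType) (d : nat) (ps : seq 'rV[R]_d).
Local Notation n := (size ps).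
Local Notation p i := (nth 0 ps i).
Hypothesis ps_ge2 : (2 <= n)%N.
Hypothesis ps_uniq : uniq ps.
Hypothesis ps_greedy : greedy_perm ps.

Lemma dpre_le x i k : (k < i)%N -> dpre ps x i <= edist x (p k).
Proof. by move=> ki; apply: (bigmin_le _ (Ordinal ki) (fun k : 'I_i => edist x (p k))). Qed.

Lemma dpre_ge x i a : (0 < i)%N ->
  (forall k, (k < i)%N -> a <= edist x (p k)) -> a <= dpre ps x i.
Proof. by move=> i0 a_le; apply/bigmin_geP; split=> [|k _]; apply: a_le. Qed.

Lemma dpre_gt x i a : (0 < i)%N ->
  (forall k, (k < i)%N -> a < edist x (p k)) -> a < dpre ps x i.
Proof. by move=> i0 a_lt; apply/bigmin_gtP; split=> [|k _]; apply: a_lt. Qed.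

Lemma dpre1 x : dpre ps x 1 = edist x (p 0).
Proof.
apply/eqP; rewrite eq_le dpre_le //=.
by apply: dpre_ge => // k; rewrite ltnS leqn0 => /eqP ->.
Qed.

Lemma edist_nth_gt0 i j : (i < n)%N -> (j < n)%N -> i != j -> 0 < edist (p i) (p j).
Proof.
move=> i_n j_n ij; rewrite lt_neqAle edist_ge0 andbT eq_sym.
by apply: contra ij => /eqP/edist_eq0/eqP; rewrite nth_uniq.
Qed.

Lemma edist_le_maxdist i j : (i < n)%N -> (j < n)%N -> i != j ->
  edist (p i) (p j) <= maxdist ps.
Proof.
by move=> i_n j_n ij; apply: (bigmax_sup (Ordinal i_n)) => //; apply: (bigmax_sup (Ordinal j_n)).
Qed.

Lemma mindist_le_edist i j : (i < n)%N -> (j < n)%N -> i != j ->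
  mindist ps <= edist (p i) (p j).
Proof.
by move=> i_n j_n ij; apply: (bigmin_inf (Ordinal i_n)) => //; apply: (bigmin_inf (Ordinal j_n)).
Qed.

Lemma maxdist_gt0 : 0 < maxdist ps.
Proof.
have n_gt0 : (0 < n)%N by apply: ltnW.
exact: lt_le_trans (edist_nth_gt0 n_gt0 ps_ge2 isT) (edist_le_maxdist n_gt0 ps_ge2 isT).
Qed.

Lemma mindist_gt0 : 0 < mindist ps.
Proof.
apply/bigmin_gtP; split=> [|i _]; first exact: maxdist_gt0.
by apply/bigmin_gtP; split=> [|j ij]; [exact: maxdist_gt0 | exact: edist_nth_gt0].
Qed.

Lemma spread_ge1 : 1 <= spread ps.
Proof.
rewrite ler_pdivlMr ?mindist_gt0 // mul1r.
have n_gt0 : (0 < n)%N by apply: ltnW.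
exact: le_trans (mindist_le_edist n_gt0 ps_ge2 isT) (edist_le_maxdist n_gt0 ps_ge2 isT).
Qed.

Lemma radiusE j : (0 < j)%N -> (j < n)%N -> radius ps j = dpre ps (p j) j.
Proof.
move=> j_gt0 j_n; rewrite /radius; case: eqP => [j1|//]; subst j; rewrite dpre1.
apply/eqP; rewrite eq_le [X in _ && X](le_bigmax_seq _ _ _ _ (mem_nth 0 j_n)) //= andbT.
rewrite big_seq; apply: bigmax_le => [|x /(nthP 0)[[|k] k_n <-]]; first exact: edist_ge0.
  by rewrite edistxx edist_ge0.
by have := ps_greedy (isT : (0 < 1)%N) (isT : (1 <= k.+1)%N) k_n; rewrite !dpre1.
Qed.

Lemma dpre_le_maxdist j : (0 < j)%N -> (j < n)%N -> dpre ps (p j) j <= maxdist ps.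
Proof.
move=> j_gt0 j_n; apply: le_trans (dpre_le _ j_gt0) _.
by apply: edist_le_maxdist; rewrite // ?(ltn_trans j_gt0) // -lt0n.
Qed.

Lemma mindist_le_dpre j : (0 < j)%N -> (j < n)%N -> mindist ps <= dpre ps (p j) j.
Proof.
move=> j_gt0 j_n; apply: dpre_ge => // k kj.
by apply: mindist_le_edist; rewrite ?(ltn_trans kj) // neq_ltn kj orbT.
Qed.

End GreedyPermutation.

Section Routing.
Variables (R : realType) (d : nat) (ps : seq 'rV[R]_d) (eps : R) (q : 'rV[R]_d).
Local Notation n := (size ps).
Local Notation p i := (nth 0 ps i).
Local Notation out := (out_edges ps eps).
Local Notation dq c := (edist q (p c)).
Hypothesis ps_greedy : greedy_perm ps.
Hypothesis eps_gt0 : 0 < eps.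
Hypothesis eps_lt : eps < 1 / 2.

Lemma mem_out_edges c j : (j \in out c) = (j < n)%N && edge ps eps c j.
Proof. by rewrite mem_filter mem_iota add0n andbC. Qed.

Lemma out_edges_lt c j : j \in out c -> (j < n)%N /\ (c < j)%N.
Proof. by rewrite mem_out_edges => /andP[-> /and3P[_ -> _]]. Qed.

Lemma uniq_out_edges c : uniq (out c).
Proof. by rewrite filter_uniq ?iota_uniq. Qed.

Lemma nth_out_edges_homo c : {in [pred m | (m < size (out c))%N] &,
  {homo nth 0%N (out c) : i j / (i <= j)%N >-> (i <= j)%N}}.
Proof.
apply: sorted_leq_nth; [exact: leq_trans | exact: leqnn |].
by apply: sorted_filter; [exact: leq_trans | exact: iota_sorted].
Qed.

Lemma improves_le c j : improves ps eps q c j -> dq j <= dq c.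
Proof.
move/le_trans; apply; rewrite ler_piMl ?edist_ge0 //.
by rewrite lerBlDr lerDl divr_ge0 // ltW.
Qed.

Lemma route_exists c : (c < n)%N -> exists t r, route ps eps q c t r.
Proof.
have [k] := ubnP (n - c); elim: k c => // k IH c nc_k c_n.
have [has_imp | /hasPn no_imp] := boolP (has (improves ps eps q c) (out c)).
  set m := find (improves ps eps q c) (out c).
  have m_lt : (m < size (out c))%N by rewrite -has_find.
  have [j_n c_j] := out_edges_lt (mem_nth 0%N m_lt).
  have [|t [r route_j]] := IH _ _ j_n; first lia.
  exists (m.+1 + t)%N, r; apply: route_move route_j => //; first exact: nth_find.
  by move=> m' /(before_find 0%N) ->.
by exists (size (out c)), c; apply: route_stop => m m_lt; apply/no_imp/mem_nth.
Qed.

Lemma route_lt c t r : route ps eps q c t r -> (c < n)%N -> (r < n)%N.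
Proof.
elim=> {c t r} // c m t r m_lt _ _ _ IH _.
by apply: IH; have [] := out_edges_lt (mem_nth 0%N m_lt).
Qed.

Variable k0 : nat.
Hypothesis k0_lt : (k0 < n)%N.

Definition prefix_far (a : R) j := forall k, (k < j)%N -> a < edist (p k) (p k0).

Lemma first_in_ball a : 0 <= a ->
  exists j, [/\ (j <= k0)%N, edist (p j) (p k0) <= a & prefix_far a j].
Proof.
move=> a_ge0; have in_ball : exists k, (k < n)%N && (edist (p k) (p k0) <= a).
  by exists k0; rewrite k0_lt edistxx.
case: (ex_minnP in_ball) => j /andP[j_n j_a] j_min; exists j; split=> //.
  by apply: j_min; rewrite k0_lt edistxx.
move=> k kj; rewrite ltNge; apply/negP => k_a.
by have := j_min k; rewrite k_a (ltn_trans kj j_n) leqNgt kj => /(_ isT).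
Qed.

Lemma improving_friend c : (c < n)%N -> (1 + eps) * dq k0 < dq c ->
  prefix_far (eps * dq c / 4) c ->
  exists j, [/\ j \in out c, improves ps eps q c j & prefix_far (eps * dq c / 4) j].
Proof.
move=> c_n far_c c_far; set a := eps * dq c / 4 in c_far *.
have dc_gt0 : 0 < dq c.
  by apply: le_lt_trans far_c; rewrite mulr_ge0 ?addr_ge0 ?edist_ge0 // ltW.
have gap : dq k0 <= (1 - eps / 2) * dq c.
  have : 0 <= eps * dq c * (1 - eps).
    by rewrite mulr_ge0 ?(ltW (mulr_gt0 _ _)) //; move: eps_lt; lra.
  move: far_c eps_gt0; nra.
have a_ge0 : 0 <= a by rewrite /a; have := mulr_gt0 eps_gt0 dc_gt0; lra.
have [j [j_k0 j_a j_far]] := first_in_ball a_ge0.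
have j_n : (j < n)%N by apply: leq_ltn_trans k0_lt.
have c_j : (c < j)%N.
  rewrite ltnNge leq_eqVlt; apply/negP => /orP[/eqP jc | /c_far]; last by rewrite ltNge j_a.
  have := edist_triangle q (p k0) (p c); rewrite [edist (p k0) _]edistC.
  by move: j_a gap dc_gt0 eps_gt0; rewrite jc /a; nra.
have j_gt0 : (0 < j)%N by apply: leq_ltn_trans c_j.
have imp : improves ps eps q c j.
  have := edist_triangle q (p k0) (p j); rewrite [edist (p k0) _]edistC /improves.
  by move: j_a gap; rewrite /a; lra.
exists j; split=> //; rewrite mem_out_edges j_n /edge j_gt0 c_j (radiusE ps_greedy) //=.
have r_gt : a < dpre ps (p j) j.
  apply: lt_le_trans (ps_greedy j_gt0 j_k0 k0_lt).
  by apply: dpre_gt => // k kj; rewrite edistC; apply: j_far.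
have cj_le := edist_triangle (p c) q (p j); rewrite [edist (p c) q]edistC in cj_le.
rewrite ler_pdivlMr //.
have := ler_wpM2r (ltW eps_gt0) cj_le; have := ler_wpM2r (ltW eps_gt0) imp.
have := mulr_ge0 (mulr_ge0 (ltW eps_gt0) (ltW eps_gt0)) (ltW dc_gt0).
by move: r_gt; rewrite /a; nra.
Qed.

Lemma route_approx c t r : route ps eps q c t r -> (c < n)%N ->
  dq c <= (1 + eps) * dq k0 \/ prefix_far (eps * dq c / 4) c ->
  dq r <= (1 + eps) * dq k0.
Proof.
elim=> {c t r} [c stop | c m t r m_lt imp before _ IH] c_n inv.
  case: inv => [// | c_far]; have [// | far_c] := lerP (dq c) ((1 + eps) * dq k0).
  have [j [j_in imp _]] := improving_friend c_n far_c c_far.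
  by have := stop (index j (out c)); rewrite index_mem j_in nth_index // imp => /(_ isT).
set j' := nth 0%N (out c) m in imp IH *.
have [j'_n _] := out_edges_lt (mem_nth 0%N m_lt).
apply: IH => //; have j'_le := improves_le imp.
case: inv => [c_ok | c_far]; first by left; apply: le_trans c_ok.
have [c_ok | far_c] := lerP (dq c) ((1 + eps) * dq k0); first by left; apply: le_trans c_ok.
right; have [j [j_in j_imp j_far]] := improving_friend c_n far_c c_far.
have m_le : (m <= index j (out c))%N.
  by rewrite leqNgt; apply/negP => /before; rewrite nth_index // j_imp.
have j'_j : (j' <= j)%N.
  by rewrite -[j in (_ <= j)%N](nth_index 0%N j_in); apply: nth_out_edges_homo; rewrite ?inE ?index_mem.
move=> k kj'; apply: le_lt_trans (j_far k (leq_trans kj' j'_j)).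
by move: j'_le eps_gt0; nra.
Qed.

End Routing.

Lemma truncn_eq_dist (R : archiRealFieldType) (a b : R) : 0 <= a -> 0 <= b ->
  Num.truncn a = Num.truncn b -> `|a - b| < 1.
Proof.
move=> a_ge0 b_ge0 ab; have /andP[a1 a2] := truncn_itv a_ge0.
have /andP[b1 b2] := truncn_itv b_ge0; rewrite ab -natr1 in a2 a1 b2.
by rewrite ltr_norml; apply/andP; split; move: a1 a2 b1 b2; lra.
Qed.

Section Grid.
Variables (R : realType) (d : nat).
Implicit Types (c x y : 'rV[R]_d) (h : R).

(* The cube of half-width (m+1) h around c, cut into (2m+2)^d cells of side h. *)
Definition grid_cell m h c x : {ffun 'I_d -> 'I_(2 * m).+2} :=
  [ffun k => inord (Num.truncn ((x ord0 k - c ord0 k) / h + m.+1%:R))].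

Lemma grid_cell_close m h c x y : 0 < h ->
  (forall k, `|x ord0 k - c ord0 k| < m.+1%:R * h) ->
  (forall k, `|y ord0 k - c ord0 k| < m.+1%:R * h) ->
  grid_cell m h c x = grid_cell m h c y -> edist x y <= d%:R * h.
Proof.
move=> h_gt0 x_near y_near /ffunP same_cell; apply: edist_le_coord (ltW h_gt0) _ => k.
have shift_in (z : 'rV[R]_d) : `|z ord0 k - c ord0 k| < m.+1%:R * h ->
    0 <= (z ord0 k - c ord0 k) / h + m.+1%:R /\
    (Num.truncn ((z ord0 k - c ord0 k) / h + m.+1%:R) < (2 * m).+2)%N.
  rewrite -ltr_pdivrMr // -(gtr0_norm h_gt0) -normf_div ltr_norml (gtr0_norm h_gt0).
  move=> /andP[lo hi]; have shift_ge0 : 0 <= (z ord0 k - c ord0 k) / h + m.+1%:R.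
    by move: lo; lra.
  by split; rewrite // truncn_lt_nat // -!natr1 natrM; move: hi; lra.
have [x_ge0 x_lt] := shift_in x (x_near k); have [y_ge0 y_lt] := shift_in y (y_near k).
move: (same_cell k); rewrite !ffunE => /(congr1 val); rewrite /= !inordK //.
move=> /(truncn_eq_dist x_ge0 y_ge0).
rewrite opprD addrACA subrr addr0 -mulrBl opprB addrA subrK normf_div (gtr0_norm h_gt0).
by rewrite ltr_pdivrMr // mul1r => /ltW.
Qed.

End Grid.

Lemma expR1_le4 (R : realType) : expR (1 : R) <= 4.
Proof.
have half_ge := expR_ge1Dx (- (1 / 2) : R).
have half_inv := expRxMexpNx_1 (1 / 2 : R).
have -> : expR (1 : R) = expR (1 / 2) ^+ 2 by rewrite -expRM_natl; congr expR; lra.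
have := expR_gt0 (1 / 2 : R); have := expR_gt0 (- (1 / 2) : R).
by move: half_ge half_inv; nra.
Qed.

Section FriendPacking.
Variables (R : realType) (d : nat) (ps : seq 'rV[R]_d) (eps : R).
Local Notation n := (size ps).
Local Notation p i := (nth 0 ps i).
Local Notation out := (out_edges ps eps).
Local Notation Dmax := (maxdist ps).
Hypothesis d_gt0 : (0 < d)%N.
Hypothesis ps_ge2 : (2 <= n)%N.
Hypothesis ps_uniq : uniq ps.
Hypothesis ps_greedy : greedy_perm ps.
Hypothesis eps_gt0 : 0 < eps.

Lemma radius_gt0 j : (0 < j)%N -> (j < n)%N -> 0 < radius ps j.
Proof.
move=> j_gt0 j_n; rewrite radiusE //.
exact: lt_le_trans (mindist_gt0 ps_ge2 ps_uniq) (mindist_le_dpre _ _).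
Qed.

Definition scale_level j := Num.truncn (ln (Dmax / radius ps j)).
Definition top_level := Num.truncn (ln (spread ps)).

Lemma scale_level_bounds j : (0 < j)%N -> (j < n)%N ->
  [/\ expR (scale_level j)%:R <= Dmax / radius ps j,
      Dmax / radius ps j < expR (scale_level j)%:R * expR 1 &
      (scale_level j <= top_level)%N].
Proof.
move=> j_gt0 j_n; have r_gt0 := radius_gt0 j_gt0 j_n.
have ratio_ge1 : 1 <= Dmax / radius ps j.
  by rewrite ler_pdivlMr // mul1r radiusE // dpre_le_maxdist.
have ratio_gt0 : 0 < Dmax / radius ps j by apply: lt_le_trans ratio_ge1.
have /andP[lo hi] := truncn_itv (ln_ge0 ratio_ge1); rewrite -natr1 in hi.
have ratioK : expR (ln (Dmax / radius ps j)) = Dmax / radius ps j by rewrite lnK ?posrE.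
split; first by rewrite -[leRHS]ratioK ler_expR.
  by rewrite -expRD -[ltLHS]ratioK ltr_expR.
have spread_gt0 : 0 < spread ps by apply: lt_le_trans (spread_ge1 ps_ge2 ps_uniq).
apply: le_truncn; rewrite ler_ln ?posrE //; apply: ler_wpM2l; first exact/ltW/maxdist_gt0.
by rewrite lef_pV2 ?posrE ?mindist_gt0 // radiusE // mindist_le_dpre.
Qed.

(* At level k a cell has diameter at most d * cell_side k = Dmax e^-k / 4 < r_j,
   and a friend lies within 8 r_j / eps <= (32 d / eps) cell_side k of p_c. *)
Definition cell_side k : R := Dmax / (4 * expR k%:R * d%:R).
Definition grid_radius := Num.truncn (32 * d%:R / eps).

Definition friend_cell c j : 'I_top_level.+1 * {ffun 'I_d -> 'I_(2 * grid_radius).+2} :=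
  (inord (scale_level j), grid_cell grid_radius (cell_side (scale_level j)) (p c) (p j)).

Lemma cell_side_gt0 k : 0 < cell_side k.
Proof. by rewrite divr_gt0 ?maxdist_gt0 // !mulr_gt0 ?expR_gt0 ?ltr0n. Qed.

Lemma mul_dim_cell_side k : d%:R * cell_side k = Dmax / expR k%:R / 4.
Proof. by rewrite /cell_side; field; rewrite ?pnatr_eq0 -?lt0n ?gt_eqF ?expR_gt0. Qed.

Lemma friend_in_grid c j k : j \in out c ->
  `|p j ord0 k - p c ord0 k| < grid_radius.+1%:R * cell_side (scale_level j).
Proof.
move=> j_in; have [j_n c_j] := out_edges_lt j_in.
have j_gt0 : (0 < j)%N by apply: leq_ltn_trans c_j.
move: j_in; rewrite mem_out_edges => /andP[_ /and3P[_ _ friend]].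
have [level_le _ _] := scale_level_bounds j_gt0 j_n.
apply: le_lt_trans (ler_coord_edist _ _ _) _; rewrite edistC.
apply: le_lt_trans friend _; set E := expR (scale_level j)%:R in level_le *.
have E_gt0 : 0 < E by apply: expR_gt0.
have r_le : radius ps j <= Dmax / E.
  by rewrite ler_pdivlMr // mulrC -ler_pdivlMr ?radius_gt0.
apply: le_lt_trans (_ : _ <= 32 * d%:R / eps * cell_side (scale_level j)) _.
  have -> : 32 * d%:R / eps * cell_side (scale_level j) = 8 * (Dmax / E) / eps.
    by rewrite /cell_side -/E; field; rewrite ?pnatr_eq0 -?lt0n ?gt_eqF.
  by apply: ler_wpM2r; [rewrite invr_ge0 ltW | apply: ler_wpM2l].
by rewrite ltr_pM2r ?cell_side_gt0 // truncnS_gt.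
Qed.

Lemma friends_apart i j : (0 < j)%N -> (j < n)%N -> (i < j)%N ->
  d%:R * cell_side (scale_level j) < edist (p i) (p j).
Proof.
move=> j_gt0 j_n ij; have [_ level_gt _] := scale_level_bounds j_gt0 j_n.
set E := expR (scale_level j)%:R in level_gt *.
have E_gt0 : 0 < E by apply: expR_gt0.
rewrite mul_dim_cell_side edistC; apply: lt_le_trans (dpre_le _ _ ij).
have r_gt0 := radius_gt0 j_gt0 j_n.
rewrite -(radiusE ps_greedy) // -/E !ltr_pdivrMr //; rewrite ltr_pdivrMr // in level_gt.
have := expR1_le4 R; have := mulr_gt0 E_gt0 r_gt0; move: level_gt; nra.
Qed.

Lemma friend_cell_inj c : {in out c &, injective (friend_cell c)}.
Proof.
have level_lt j : j \in out c -> (scale_level j < top_level.+1)%N.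
  move=> /out_edges_lt[j_n c_j].
  by have [_ _] := scale_level_bounds (leq_ltn_trans (leq0n c) c_j) j_n.
have cells_differ i j : i \in out c -> j \in out c -> (i < j)%N ->
    friend_cell c i <> friend_cell c j.
  move=> i_in j_in ij [/(congr1 val)] /=; rewrite !inordK ?level_lt // => same_level.
  have [j_n c_j] := out_edges_lt j_in.
  rewrite same_level => /grid_cell_close close.
  have := friends_apart (leq_ltn_trans (leq0n c) c_j) j_n ij.
  rewrite ltNge close ?cell_side_gt0 // => k; last exact: friend_in_grid.
  by rewrite -same_level; apply: friend_in_grid.
move=> i j i_in j_in same_cell.
by case: (ltngtP i j) => // [ij | ji]; [case: (cells_differ i j) | case: (cells_differ j i)].
Qed.

Lemma size_out_edges c : (size (out c) <= top_level.+1 * (2 * grid_radius).+2 ^ d)%N.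
Proof.
rewrite -(size_map (friend_cell c)).
have -> : (top_level.+1 * (2 * grid_radius).+2 ^ d)%N =
    #|{: 'I_top_level.+1 * {ffun 'I_d -> 'I_(2 * grid_radius).+2}}|.
  by rewrite card_prod card_ffun !card_ord.
rewrite cardE; apply: uniq_leq_size => [|x _]; last by rewrite mem_enum.
by rewrite map_inj_in_uniq ?uniq_out_edges //; apply: friend_cell_inj.
Qed.

End FriendPacking.

Lemma ln_contraction (R : realType) (e a x y : R) : 0 < e -> e < 4 ->
  0 < a -> a <= y -> y <= (1 - e / 4) * x -> 1 + 4 / e * ln (y / a) <= 4 / e * ln (x / a).
Proof.
move=> e_gt0 e_lt4 a_gt0 a_y y_x.
have y_gt0 : 0 < y by apply: lt_le_trans a_y.
have shrink_gt0 : 0 < 1 - e / 4 by move: e_lt4; lra.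
have x_gt0 : 0 < x by rewrite -(pmulr_rgt0 _ shrink_gt0); apply: lt_le_trans y_x.
have ln_shrink : ln (1 - e / 4) <= - (e / 4) by apply: le_ln1Dx; move: e_lt4; lra.
have [xa_gt0 ya_gt0] : 0 < x / a /\ 0 < y / a by rewrite !divr_gt0.
have : ln (y / a) <= ln (1 - e / 4) + ln (x / a).
  rewrite -lnM ?posrE // ler_ln ?posrE ?mulr_gt0 ?invr_gt0 // mulrA.
  by apply: ler_wpM2r; rewrite // invr_ge0 ltW.
move=> /le_trans /(_ (lerD ln_shrink (lexx _))).
move=> /(ler_wpM2l (divr_ge0 (ler0n R 4) (ltW e_gt0))).
rewrite mulrDr (_ : 4 / e * - (e / 4) = -1); first lra.
by field; rewrite gt_eqF.
Qed.

Section QueryTime.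
Variables (R : realType) (d : nat) (ps : seq 'rV[R]_d) (eps : R) (q : 'rV[R]_d).
Local Notation n := (size ps).
Local Notation p i := (nth 0 ps i).
Local Notation out := (out_edges ps eps).
Local Notation dq c := (edist q (p c)).
Hypothesis d_gt0 : (0 < d)%N.
Hypothesis ps_ge2 : (2 <= n)%N.
Hypothesis ps_uniq : uniq ps.
Hypothesis ps_greedy : greedy_perm ps.
Hypothesis eps_gt0 : 0 < eps.
Hypothesis eps_lt : eps < 1 / 2.

Definition max_out_degree := ((top_level ps).+1 * (2 * grid_radius d eps).+2 ^ d)%N.
Local Notation Delta := max_out_degree.

(* The walk moves only from vertices at distance at least walk_floor from q, and
   each move shrinks that distance by 1 - eps/4; so from distance x at most
   1 + (4/eps) ln (x / walk_floor) moves follow, and each move, like the final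
   stop, scans at most Delta edges. *)
Definition walk_floor : R := Num.max (mindist ps / 2) (dq 0 - maxdist ps).

Definition scan_budget (x : R) : R :=
  if x < walk_floor then Delta%:R else Delta%:R * (2 + 4 / eps * ln (x / walk_floor)).

Lemma walk_floor_gt0 : 0 < walk_floor.
Proof. by rewrite lt_max divr_gt0 ?mindist_gt0. Qed.

Lemma start_dist_le c : (c < n)%N -> dq 0 - maxdist ps <= dq c.
Proof.
move=> c_n; have := edist_triangle q (p c) (p 0).
have : edist (p c) (p 0) <= maxdist ps.
  case: c c_n => [|c] c_n; first by rewrite edistxx ltW ?maxdist_gt0.
  by rewrite edist_le_maxdist // ltnW.
lra.
Qed.

Lemma log_moves_ge0 x : walk_floor <= x -> 0 <= 4 / eps * ln (x / walk_floor).
Proof.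
move=> floor_x; apply: mulr_ge0; first by rewrite divr_ge0 // ltW.
by apply: ln_ge0; rewrite ler_pdivlMr ?walk_floor_gt0 ?mul1r.
Qed.

Lemma scan_budget_ge x : Delta%:R <= scan_budget x.
Proof.
rewrite /scan_budget; case: ltP => // /log_moves_ge0 moves_ge0.
by rewrite ler_peMr //; lra.
Qed.

Lemma route_scans_le c t r : route ps eps q c t r -> (c < n)%N -> t%:R <= scan_budget (dq c).
Proof.
elim=> {c t r} [c _ | c m t r m_lt imp _ _ IH] c_n.
  by apply: le_trans (scan_budget_ge _); rewrite ler_nat size_out_edges.
set j := nth 0%N (out c) m in imp IH *.
have [j_n c_j] := out_edges_lt (mem_nth 0%N m_lt).
move/(_ j_n): IH => IH.
have scans_c : m.+1%:R <= Delta%:R :> R by rewrite ler_nat (leq_trans m_lt) ?size_out_edges.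
have floor_c : walk_floor <= dq c.
  rewrite ge_max start_dist_le // andbT.
  have := mindist_le_edist j_n c_n; rewrite neq_ltn c_j orbT => /(_ isT).
  have := edist_triangle (p j) q (p c); rewrite [edist (p j) q]edistC.
  by have := improves_le eps_gt0 imp; lra.
rewrite /scan_budget ltNge floor_c /= natrD.
have moves_ge0 := log_moves_ge0 floor_c.
move: IH; rewrite /scan_budget; case: ltP => [_ | floor_j] IH.
  by apply: le_trans (lerD scans_c IH) _; have := ler0n R Delta; nra.
have eps_lt4 : eps < 4 by move: eps_lt; lra.
have fewer_moves := ln_contraction eps_gt0 eps_lt4 walk_floor_gt0 floor_j imp.
have := ler_wpM2l (ler0n R Delta) fewer_moves; move: scans_c IH; nra.
Qed.

Lemma start_over_floor_le : dq 0 / walk_floor <= 3 * spread ps.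
Proof.
have floor_gt0 := walk_floor_gt0; have Phi_ge1 := spread_ge1 ps_ge2 ps_uniq.
have Dmax_eq : maxdist ps = spread ps * mindist ps by rewrite divfK ?gt_eqF ?mindist_gt0.
have [floor_min floor_start] : mindist ps / 2 <= walk_floor /\ dq 0 - maxdist ps <= walk_floor.
  by rewrite !le_max !lexx orbT.
rewrite ler_pdivrMr //; have := mulr_ge0 (ltW (lt_le_trans ltr01 Phi_ge1)) (ltW floor_gt0).
by move: floor_min floor_start Phi_ge1; rewrite Dmax_eq; nra.
Qed.

Lemma scan_budget_start : scan_budget (dq 0) <= Delta%:R * (10 / eps * (1 + ln (spread ps))).
Proof.
have lnPhi_ge0 := ln_ge0 (spread_ge1 ps_ge2 ps_uniq).
have inv_eps_ge2 : 2 <= eps^-1 by rewrite -[2]invrK lef_pV2 ?posrE //; move: eps_lt; lra.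
rewrite /scan_budget; case: ltP => [_ | floor_0].
  by rewrite ler_peMr //; move: inv_eps_ge2 lnPhi_ge0; nra.
apply: ler_wpM2l => //.
have Phi_gt0 : 0 < spread ps by apply: lt_le_trans (spread_ge1 ps_ge2 ps_uniq).
have ln3_le2 : ln (3 : R) <= 2 by rewrite (_ : 3 = 1 + 2) ?le_ln1Dx //; lra.
have : ln (dq 0 / walk_floor) <= 2 + ln (spread ps).
  have ratio_gt0 : 0 < dq 0 / walk_floor.
    by rewrite divr_gt0 ?walk_floor_gt0 ?(lt_le_trans walk_floor_gt0 floor_0).
  have three_Phi_gt0 : 0 < 3 * spread ps by rewrite mulr_gt0.
  apply: le_trans (_ : ln (3 * spread ps) <= _).
    by rewrite ler_ln ?posrE //; apply: start_over_floor_le.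
  by rewrite lnM ?posrE // lerD2r.
have inv_eps_ge0 : 0 <= eps^-1 by rewrite invr_ge0 ltW.
move=> /(ler_wpM2l inv_eps_ge0); have := mulr_ge0 inv_eps_ge0 lnPhi_ge0.
by move: inv_eps_ge2; nra.
Qed.

Lemma max_out_degree_le : Delta%:R <= (1 + ln (spread ps)) * ((65 * d)%N%:R / eps) ^+ d.
Proof.
have inv_eps_ge2 : 2 <= eps^-1 by rewrite -[2]invrK lef_pV2 ?posrE //; move: eps_lt; lra.
have d_ge1 : 1 <= d%:R :> R by rewrite ler1n.
have d_eps_ge0 : 0 <= d%:R * eps^-1 by rewrite mulr_ge0 ?invr_ge0 ?(ltW eps_gt0).
rewrite /max_out_degree natrM natrX; apply: ler_pM; rewrite ?exprn_ge0 //.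
  by rewrite -natr1 addrC lerD2l truncn_le ln_ge0 ?spread_ge1.
apply: lerXn2r; rewrite ?nnegrE ?divr_ge0 ?(ltW eps_gt0) //.
have m_le : (grid_radius d eps)%:R <= 32 * d%:R / eps.
  by rewrite truncn_le divr_ge0 ?mulr_ge0 ?(ltW eps_gt0).
rewrite -addn2 natrD !natrM -!mulrA; move: m_le; rewrite -mulrA.
by move: d_eps_ge0 inv_eps_ge2 d_ge1; nra.
Qed.

End QueryTime.

Theorem lemma4p3 :
  forall d : nat, (0 < d)%N ->
  exists C : nat,
  forall (R : realType) (ps : seq 'rV[R]_d) (eps : R) (q : 'rV[R]_d),
    (2 <= size ps)%N -> uniq ps -> greedy_perm ps ->
    0 < eps -> eps < 1 / 2 ->
    (exists t r, route ps eps q 0 t r) /\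
    (forall t r, route ps eps q 0 t r ->
       (r < size ps)%N /\
       (forall p' : 'rV[R]_d, p' \in ps ->
          edist q (nth 0 ps r) <= (1 + eps) * edist q p') /\
       t%:R <= C%:R * eps ^- d.+1 * (1 + ln (spread ps)) ^+ 2).
Proof.
move=> d d_gt0; exists (10 * (65 * d) ^ d)%N => R ps eps q ps_ge2 ps_uniq ps_greedy eps_gt0 eps_lt.
have n_gt0 : (0 < size ps)%N by apply: ltnW.
split=> [|t r walk]; first exact: route_exists.
split; first exact: route_lt walk n_gt0.
split=> [p' p'_in | ].
  rewrite -(nth_index 0 p'_in); apply: route_approx walk n_gt0 _ => //; first by rewrite index_mem.
  by right.
apply: le_trans (route_scans_le d_gt0 ps_ge2 ps_uniq ps_greedy eps_gt0 eps_lt walk n_gt0) _.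
apply: le_trans (scan_budget_start q ps_ge2 ps_uniq eps_gt0 eps_lt) _.
have lnPhi_ge0 : 0 <= 1 + ln (spread ps) by rewrite addr_ge0 ?ln_ge0 ?spread_ge1.
apply: le_trans (ler_wpM2r _ (max_out_degree_le d_gt0 ps_ge2 ps_uniq eps_gt0 eps_lt)) _.
  by rewrite mulr_ge0 ?divr_ge0 ?(ltW eps_gt0).
rewrite le_eqVlt; apply/predU1P; left.
rewrite !natrM natrX !natrM expr_div_n exprS; field.
by rewrite expf_neq0 gt_eqF.
Qed.
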